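(* Let $M\in\mathcal{B}_{\infty}$ be such that $\mu(M)<\infty$. Then, $L^{p}(M,\mu)$ is separable for every $1\leq p <\infty$.
   Context: Let $\mathcal{B}$ be the Borel $\sigma$-algebra of $\mathbb{R}$, $\lambda$ the Lebesgue measure, and $\mathcal{B}_{\infty}$ the $\sigma$-algebra on $\mathbb{R}^{\mathbb{N}}$ generated by the cylinder sets $\prod_{i=1}^{m}C_{i}\times\prod_{i=m+1}^{\infty}\mathbb{R}$ with $C_i\in\mathcal{B}$, $m\in\mathbb{N}$. Let $\mathcal{F}(\mathcal{B},\lambda)$ be the set of finite rectangles $\prod_{i\in\mathbb{N}}C_{i}$ with $C_i\in\mathcal{B}$ and $\prod_{i}\lambda(C_i)\in[0,\infty)$, with $\mathrm{vol}(\prod_{i}C_i):=\prod_i\lambda(C_i)$. The measure $\mu$ is the restriction to $\mathcal{B}_{\infty}$ of the outer measure $\mu^{\ast}(A):=\inf\{\sum_{n}\mathrm{vol}(\mathscr{C}_{n}) : \mathscr{C}_{n}\in\mathcal{F}(\mathcal{B},\lambda),\ A\subset\bigcup_{n}\mathscr{C}_{n}\}$ ($\inf\varnothing=\infty$). *)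

From HB Require Import structures.
From mathcomp Require Import all_boot all_order all_algebra.
From mathcomp Require Import all_classical all_reals all_analysis.
Set Implicit Arguments. Unset Strict Implicit. Unset Printing Implicit Defensive.
Import Order.TTheory GRing.Theory Num.Theory numFieldNormedType.Exports.
Local Open Scope classical_set_scope.
Local Open Scope ring_scope.

(* The space R^N is modelled as [nat -> R]; coordinate i of the paper is
   coordinate (i-1) here. *)
Section InfiniteProduct.
Variable R : realType.

Notation RN := (nat -> R).

Definition cylinders : set (set RN) :=
  [set A | exists (m : nat) (C : nat -> set R),
     (forall i, measurable (C i)) /\
     A = [set x : RN | forall i, (i < m)%N -> C i (x i)]].

Definition RNinf : measurableType _ := g_sigma_algebraType cylinders.

Definition rect (C : nat -> set R) : set RN :=
  [set x | forall i, C i (x i)].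

Definition vol_partial (C : nat -> set R) (n : nat) : \bar R :=
  (\prod_(i < n) lebesgue_measure (C i))%E.

Definition finite_rect (C : nat -> set R) : Prop :=
  (forall i, measurable (C i)) /\
  exists r : R, vol_partial C n @[n --> \oo] --> r%:E.

Definition vol (C : nat -> set R) : \bar R := limn (vol_partial C).

(* the outer measure mu^* (ereal_inf set0 = +oo) *)
Definition mu_star (A : set RN) : \bar R :=
  ereal_inf [set s : \bar R | exists Cs : nat -> nat -> set R,
     (forall n, finite_rect (Cs n)) /\
     A `<=` \bigcup_n rect (Cs n) /\
     s = (\sum_(0 <= n <oo) vol (Cs n))%E].

End InfiniteProduct.

From HB Require Import structures.
From mathcomp Require Import all_boot all_order all_algebra.
From mathcomp Require Import all_classical all_reals all_analysis.
From mathcomp Require Import measurable_realfun lra.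
Import Order.TTheory GRing.Theory Num.Theory numFieldNormedType.Exports.
Set Implicit Arguments. Unset Strict Implicit. Unset Printing Implicit Defensive.
Local Open Scope classical_set_scope.
Local Open Scope ring_scope.

(* For a finite measure on a sigma-algebra generated by a countable family G,
   the measurable sets that can be approximated in measure by finite Boolean
   combinations of G form a sigma-algebra containing G, hence are all the
   measurable sets.  B_infty is generated by the countably many half-spaces
   {x | q < x_i}, q rational.  An L^p function f is the L^p limit of its
   truncated dyadic staircases (dominated convergence), which are rational
   combinations of indicators of measurable sets; replacing these sets by close
   Boolean combinations of half-spaces lands in the countable set of rational
   simple functions over such combinations. *)

(* Boolean combinations of generators, kept as syntax so that they form a
   countable type. *)
Inductive setexpr (I : Type) :=
  | SEAtom of I
  | SEEmpty
  | SECompl of setexpr I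
  | SEUnion of setexpr I & setexpr I.

Fixpoint setexpr_enc (I : Type) (t : setexpr I) : GenTree.tree I :=
  match t with
  | SEAtom i => GenTree.Leaf i
  | SEEmpty => GenTree.Node 0 [::]
  | SECompl t1 => GenTree.Node 1 [:: setexpr_enc t1]
  | SEUnion t1 t2 => GenTree.Node 2 [:: setexpr_enc t1; setexpr_enc t2]
  end.

Fixpoint setexpr_dec (I : Type) (t : GenTree.tree I) : option (setexpr I) :=
  match t with
  | GenTree.Leaf i => Some (SEAtom i)
  | GenTree.Node 0 [::] => Some (SEEmpty I)
  | GenTree.Node 1 [:: t1] => omap (@SECompl I) (setexpr_dec t1)
  | GenTree.Node 2 [:: t1; t2] =>
      if setexpr_dec t1 is Some a then omap (SEUnion a) (setexpr_dec t2)
      else None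
  | _ => None
  end.

Lemma setexpr_encK (I : Type) : pcancel (@setexpr_enc I) (@setexpr_dec I).
Proof. by elim=> //= [t -> | t1 -> t2 ->]. Qed.

HB.instance Definition _ (I : countType) :=
  Countable.copy (setexpr I) (pcan_type (@setexpr_encK I)).

Fixpoint setexpr_set (I T : Type) (G : I -> set T) (t : setexpr I) : set T :=
  match t with
  | SEAtom i => G i
  | SEEmpty => set0
  | SECompl t1 => ~` setexpr_set G t1
  | SEUnion t1 t2 => setexpr_set G t1 `|` setexpr_set G t2
  end.

Lemma setYCC (T : Type) (A B : set T) : ~` A `+` ~` B = A `+` B.
Proof. by rewrite /setY !setDE !setCK setUC setIC (setIC (~` A)). Qed.

Lemma setYUU_sub (T : Type) (A B C D : set T) :
  (A `|` B) `+` (C `|` D) `<=` (A `+` C) `|` (B `+` D).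
Proof. by move=> x /=; tauto. Qed.

Lemma measurableY d (T : measurableType d) (A B : set T) :
  measurable A -> measurable B -> measurable (A `+` B).
Proof. by move=> mA mB; apply: measurableU; exact: measurableD. Qed.

Section setexpr_approximation.
Context d (T : measurableType d) (R : realType) (J : Type) (G : J -> set T).
Hypothesis generated : <<s range G>> = measurable.
Variable nu : {measure set T -> \bar R}.
Hypothesis nu_fin : (nu [set: T] < +oo)%E.

Lemma measurable_setexpr t : measurable (setexpr_set G t).
Proof.
elim: t => [i| |t mt|t1 mt1 t2 mt2] /=.
- by rewrite -generated; apply: sub_sigma_algebra; exists i.
- exact: measurable0.
- exact: measurableC.
- exact: measurableU.
Qed.

Lemma measurableY_setexpr A t :
  measurable A -> measurable (A `+` setexpr_set G t).
Proof. by move=> mA; apply: measurableY mA (measurable_setexpr t). Qed.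

Definition approximable (A : set T) :=
  forall e : R, 0 < e -> exists t, (nu (A `+` setexpr_set G t) < e%:E)%E.

Lemma measure_lt_subU (A B C : set T) (a b : \bar R) :
  measurable A -> measurable B -> measurable C -> A `<=` B `|` C ->
  (nu B < a)%E -> (nu C < b)%E -> (nu A < a + b)%E.
Proof.
move=> mA mB mC ABC Ba Cb.
have mBC : measurable (B `|` C) by exact: measurableU.
rewrite (le_lt_trans (le_measure _ _ _ ABC)) ?inE//.
exact: le_lt_trans (measureU2 _ mB mC) (lteD Ba Cb).
Qed.

Lemma approximable0 : approximable set0.
Proof. by move=> e e0; exists (SEEmpty J); rewrite setYK measure0 lte_fin. Qed.

Lemma approximableC A : approximable A -> approximable (~` A).
Proof. by move=> hA e /hA[t ht]; exists (SECompl t); rewrite /= setYCC. Qed.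

Lemma approximableU A B : measurable A -> measurable B ->
  approximable A -> approximable B -> approximable (A `|` B).
Proof.
move=> mA mB hA hB e e0; have e2 : 0 < e / 2 by rewrite divr_gt0.
have [a ha] := hA _ e2; have [b hb] := hB _ e2.
exists (SEUnion a b); rewrite [e]splitr EFinD.
apply: measure_lt_subU ha hb; last exact: setYUU_sub.
- exact/(measurableY_setexpr (SEUnion a b))/measurableU.
- exact: measurableY_setexpr.
- exact: measurableY_setexpr.
Qed.

Lemma approximable_bigcup (F : (set T)^nat) :
  (forall k, measurable (F k) /\ approximable (F k)) ->
  approximable (\bigcup_k F k).
Proof.
move=> hF e e0; have e2 : 0 < e / 2 by rewrite divr_gt0.
set U := \bigcup_k F k.
have mF k : measurable (F k) by case: (hF k).
pose P n := \big[setU/set0]_(k < n) F k.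
have mP n : measurable (P n) by exact: bigsetU_measurable.
have aP n : approximable (P n).
  elim: n => [|n IH]; first by rewrite /P big_ord0; exact: approximable0.
  by rewrite /P big_ord_recr; apply: approximableU (mP n) (mF n) IH (hF n).2.
have mU : measurable U by exact: bigcupT_measurable.
have PU_to0 : nu (U `\` P n) @[n --> \oo] --> nu set0.
  have <- : \bigcap_n (U `\` P n) = set0.
    apply/seteqP; split=> [x Px|//]; have [[k _ Fkx] _] := Px 0%N I.
    by have [_] := Px k.+1 I; apply; exact: bigsetU_sup Fkx.
  apply: nonincreasing_cvg_mu => //.
  - by rewrite (le_lt_trans _ nu_fin) ?le_measure ?inE//; exact: measurableD.
  - by move=> n; exact: measurableD.
  - by apply: bigcapT_measurable => n; exact: measurableD.
  - move=> m n mn; apply/subsetPset; apply: setDS; exact: subset_bigsetU.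
rewrite measure0 in PU_to0.
have [N _ hN] := PU_to0 _ (open_ereal_lt' (e2 : (0 < (e / 2)%:E)%E)).
have [t ht] := aP N _ e2.
exists t; rewrite [e]splitr EFinD.
apply: measure_lt_subU (hN N (leqnn N)) ht.
- exact: measurableY_setexpr.
- exact: measurableD.
- exact: measurableY_setexpr.
- have PNU : P N `<=` U by exact: bigsetU_bigcup.
  by move=> x /=; have := PNU x; have [|] := pselect (P N x); tauto.
Qed.

Lemma approximable_measurable A : measurable A -> approximable A.
Proof.
rewrite -generated => mA.
suff : [set A | measurable A /\ approximable A] A by case.
apply: smallest_sub mA.
- split.
  + by split; [exact: measurable0|exact: approximable0].
  + move=> B [mB aB]; rewrite setTD.
    by split; [exact: measurableC|exact: approximableC].
  + move=> F hF; split; last exact: approximable_bigcup.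
    by apply: bigcupT_measurable => k; case: (hF k).
- move=> _ [i _ <-]; split; first exact: (measurable_setexpr (SEAtom i)).
  by move=> e e0; exists (SEAtom i); rewrite setYK measure0 lte_fin.
Qed.

End setexpr_approximation.

Lemma indic_setE (T : Type) (R : pzRingType) (b : T -> bool) x :
  \1_[set z | b z] x = (b x)%:R :> R.
Proof.
by rewrite indicE; congr ((nat_of_bool _)%:R); apply/idP/idP; rewrite inE.
Qed.

Lemma normr_indicB (T : Type) (R : realDomainType) (A B : set T) x :
  `|\1_A x - \1_B x| = \1_(A `+` B) x :> R.
Proof.
rewrite !indicE /setY in_setU !in_setD.
by case: (x \in A); case: (x \in B);
  rewrite /= ?subrr ?normr0 ?subr0 ?sub0r ?normrN ?normr1.
Qed.

Section rat_simple_fun.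
Context (T : Type) (R : realType).

Definition rat_simple_fun (s : seq (rat * set T)) (x : T) : R :=
  \sum_(a <- s) ratr a.1 * \1_(a.2) x.

Lemma rat_simple_fun_cons a s : rat_simple_fun (a :: s) =
  (fun x => ratr a.1 * \1_(a.2) x) \+ rat_simple_fun s.
Proof. by apply/funext => x; rewrite /rat_simple_fun big_cons. Qed.

Lemma rat_simple_fun_bound s x :
  `|rat_simple_fun s x| <= \sum_(a <- s) `|ratr a.1 : R|.
Proof.
apply: (le_trans (ler_norm_sum _ _ _)); apply: ler_sum => a _.
rewrite normrM ler_piMr// indicE.
by case: (_ \in _); rewrite ?normr1 ?normr0.
Qed.

End rat_simple_fun.
Arguments rat_simple_fun {T R} s x.

Lemma rat_simple_fun_preimage (U T : Type) (R : realType) (f : U -> T)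
    (s : seq (rat * set T)) x :
  rat_simple_fun [seq (a.1, f @^-1` a.2) | a <- s] x =
  rat_simple_fun s (f x) :> R.
Proof. by rewrite /rat_simple_fun big_map. Qed.

Lemma measurable_rat_simple_fun d (T : measurableType d) (R : realType)
    (s : seq (rat * set T)) :
  (forall a, a \in s -> measurable a.2) ->
  measurable_fun setT (rat_simple_fun s : T -> R).
Proof.
elim: s => [|a s IH] ms.
  have -> : rat_simple_fun [::] = cst 0 :> (T -> R).
    by apply/funext => x; rewrite /rat_simple_fun big_nil.
  exact: measurable_cst.
rewrite rat_simple_fun_cons; apply: measurable_funD.
  by apply/measurable_funM/measurable_indic/ms; rewrite ?mem_head.
by apply: IH => b bs; apply: ms; rewrite in_cons bs orbT.
Qed.

Section dyadic_approximation.
Variable R : realType.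

(* For y >= 0, ladder h M y = h * min(M, floor(y / h)). *)
Definition ladder (h : R) (M : nat) (y : R) : R :=
  \sum_(0 <= k < M) h * ((k.+1%:R * h <= y)%R)%:R.

Lemma ladder_le0 h M y : 0 < h -> y <= 0 -> ladder h M y = 0.
Proof.
move=> h0 y0; rewrite /ladder big1 // => k _.
by rewrite lt_geF ?mulr0// (le_lt_trans y0)// mulr_gt0.
Qed.

Lemma ladder_bounds h M y : 0 < h -> 0 <= y ->
  [/\ 0 <= ladder h M y, ladder h M y <= y &
      y <= M%:R * h -> y - h <= ladder h M y].
Proof.
move=> h0 y0.
suff [L0 Ly LM Lh] : [/\ 0 <= ladder h M y, ladder h M y <= y,
    ladder h M y <= M%:R * h &
    y - h <= ladder h M y \/ M%:R * h <= ladder h M y].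
  by split=> // yM; case: Lh => Lh; lra.
elim: M => [|M [IH0 IH1 IH2 IH3]].
  by rewrite /ladder big_geq// mul0r; split=> //; right.
rewrite /ladder big_nat_recr //= -/(ladder h M y) -natr1 mulrDl mul1r.
have [hy|hy] := leP (M%:R * h + h) y; rewrite ?mulr1 ?mulr0 ?addr0.
  by split; [lra|lra|lra|right; case: IH3 => ?; lra].
by split; [lra|lra|lra|left; case: IH3 => ?; lra].
Qed.

(* dyadic_approx n y = sign(y) * min(n, 2^-n * floor(2^n * |y|)), written as
   a rational combination of indicators of half-lines. *)
Definition dyadic_steps (n : nat) : seq (rat * set R) :=
  let q := (2 ^ n)%:R^-1 in
  [seq (q, [set y | k.+1%:R * ratr q <= y]) | k <- iota 0 (n * 2 ^ n)] ++
  [seq (- q, [set y | k.+1%:R * ratr q <= - y]) | k <- iota 0 (n * 2 ^ n)].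

Definition dyadic_approx (n : nat) : R -> R := rat_simple_fun (dyadic_steps n).

Lemma measurable_dyadic_steps n a : a \in dyadic_steps n -> measurable a.2.
Proof.
rewrite mem_cat => /orP[] /mapP[k _ ->] /=.
- have -> : [set y : R | k.+1%:R * ratr (2 ^ n)%:R^-1 <= y] =
      `[k.+1%:R * ratr (2 ^ n)%:R^-1, +oo[%classic.
    by apply/seteqP; split => y /=; rewrite in_itv/= andbT.
  exact: measurable_itv.
- have -> : [set y : R | k.+1%:R * ratr (2 ^ n)%:R^-1 <= - y] =
      `]-oo, - (k.+1%:R * ratr (2 ^ n)%:R^-1)]%classic.
    by apply/seteqP; split => y /=; rewrite in_itv/= lerNr.
  exact: measurable_itv.
Qed.

Lemma measurable_dyadic_approx n : measurable_fun setT (dyadic_approx n).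
Proof. exact: measurable_rat_simple_fun (@measurable_dyadic_steps n). Qed.

Lemma dyadic_approxE n y : dyadic_approx n y =
  ladder (2 ^ n)%:R^-1 (n * 2 ^ n) y - ladder (2 ^ n)%:R^-1 (n * 2 ^ n) (- y).
Proof.
have q2 : ratr (2 ^ n)%:R^-1 = (2 ^ n)%:R^-1 :> R by rewrite fmorphV rmorph_nat.
rewrite /dyadic_approx /rat_simple_fun big_cat !big_map /ladder /index_iota subn0.
rewrite -sumrN; congr (_ + _); apply: eq_bigr => k _ /=.
  by rewrite indic_setE q2.
by rewrite indic_setE q2 rmorphN fmorphV rmorph_nat mulNr.
Qed.

Lemma dyadic_approxN n y : dyadic_approx n (- y) = - dyadic_approx n y.
Proof. by rewrite !dyadic_approxE opprK opprB. Qed.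

Lemma dyadic_approx_err n y :
  `|y - dyadic_approx n y| <= `|y| /\
  (`|y| <= n%:R -> `|y - dyadic_approx n y| <= (2 ^ n)%:R^-1).
Proof.
wlog y0 : y / 0 <= y.
  move=> hw; have [/hw//|y0] := leP 0 y.
  have := hw (- y); rewrite oppr_ge0 normrN dyadic_approxN -opprD normrN.
  by apply; exact: ltW.
have h0 : 0 < (2 ^ n)%:R^-1 :> R by rewrite invr_gt0 ltr0n expn_gt0.
have Nh : (n * 2 ^ n)%:R * (2 ^ n)%:R^-1 = n%:R :> R.
  by rewrite natrM mulfK// pnatr_eq0 expn_eq0.
have [L0 Ly Lh] := ladder_bounds (n * 2 ^ n) h0 y0.
rewrite dyadic_approxE (@ladder_le0 _ _ (- y)) ?subr0 ?oppr_le0//.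
rewrite Nh in Lh; rewrite !ger0_norm ?subr_ge0//.
by split=> [|/Lh]; lra.
Qed.

Lemma cvg_inv_pow2 : ((2 ^ n)%:R^-1 : R) @[n --> \oo] --> 0.
Proof.
have -> : (fun n => (2 ^ n)%:R^-1 : R) = (fun n => 2^-1 ^+ n).
  by apply/funext => n; rewrite natrX exprVn.
by apply: cvg_expr; rewrite ger0_norm ?invr_ge0// invf_lt1// ltr1n.
Qed.

Lemma dyadic_approx_powR_cvg (p : R) y : 1 <= p ->
  `|y - dyadic_approx n y| `^ p @[n --> \oo] --> 0.
Proof.
move=> p1; apply: (@squeeze_cvgr _ _ _ _ (cst 0) (fun n => (2 ^ n)%:R^-1));
  last 2 first.
- exact: cvg_cst.
- exact: cvg_inv_pow2.
near=> n.
have yn : `|y| <= n%:R by near: n; exact: nbhs_infty_ger.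
have ah := (dyadic_approx_err n y).2 yn.
set a := `|y - dyadic_approx n y| in ah *.
have h1 : (2 ^ n)%:R^-1 <= 1 :> R by rewrite invf_le1 ?ltr0n ?expn_gt0// ler1n expn_gt0.
rewrite powR_ge0 /=; have [->|a0] := eqVneq a 0.
  by rewrite powR0 ?gt_eqF ?(lt_le_trans ltr01)// invr_ge0.
have a01 : 0 < a <= 1 by rewrite lt0r a0 normr_ge0 (le_trans ah h1).
exact: le_trans (ge1r_powR a01 p1) ah.
Unshelve. all: by end_near.
Qed.

End dyadic_approximation.

Section Lp_finite_measure.
Context d (T : measurableType d) (R : realType).
Variable nu : {measure set T -> \bar R}.
Hypothesis nu_fin : (nu [set: T] < +oo)%E.
Variable p : R.
Hypothesis p_ge1 : 1 <= p.

Let p_gt0 : 0 < p. Proof. exact: lt_le_trans ltr01 p_ge1. Qed.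

Lemma measurable_Lfun (f : T -> R) : f \in Lfun nu p%:E -> measurable_fun setT f.
Proof. by rewrite inE => /andP[/[!inE]]. Qed.

Lemma Lnorm_lt_integral_powR (h : T -> R) (eta : R) : 0 < eta ->
  (\int[nu]_x (`|h x| `^ p)%:E < (eta `^ p)%:E)%E ->
  ('N[nu]_p%:E[EFin \o h] < eta%:E)%E.
Proof.
move=> eta0 hI; rewrite ltNge; apply/negP => etaN.
have := gt0_ler_poweR (ltW p_gt0) _ _ etaN.
rewrite !in_itv/= lee_fin (ltW eta0) Lnorm_ge0 !leey => /(_ isT isT).
rewrite poweR_Lnorm ?gt_eqF// leNgt => /negP; apply.
by under eq_integral do rewrite -[(EFin \o h) _]/(h _)%:E abse_EFin poweR_EFin.
Qed.

Lemma Lfun_bounded (g : T -> R) C : measurable_fun setT g ->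
  (forall x, `|g x| <= C) -> g \in Lfun nu p%:E.
Proof.
move=> mg gC; rewrite inE/=; apply/andP; split; rewrite inE//=.
rewrite /finite_norm unlock poweR_lty//.
under eq_integral do rewrite abse_EFin poweR_EFin.
apply: (@le_lt_trans _ _ (\int[nu]_x (cst ((C `^ p)%:E) x))%E).
  apply: ge0_le_integral => //.
  - apply/measurable_EFinP/(measurableT_comp (measurable_powR _)) => //.
    exact: measurableT_comp.
  - move=> x _; rewrite lee_fin ge0_ler_powR ?nnegrE ?(ltW p_gt0)//.
    exact: le_trans (gC x).
by rewrite integral_cst// lte_mul_pinfty// lee_fin powR_ge0.
Qed.

Lemma approx_dyadic (f : T -> R) : f \in Lfun nu p%:E -> forall e : R, 0 < e ->
  exists n, ('N[nu]_p%:E[EFin \o (f \- (dyadic_approx n \o f))%R] < e%:E)%E.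
Proof.
move=> hf e e0.
have mf := measurable_Lfun hf.
pose F n x := (`|f x - dyadic_approx n (f x)| `^ p)%:E.
have mF n : measurable_fun setT (F n).
  apply/measurable_EFinP/(measurableT_comp (measurable_powR _))/measurableT_comp => //.
  exact/(measurable_funB mf)/(measurableT_comp (measurable_dyadic_approx n) mf).
have F0 : \forall x \ae nu, setT x -> F n x @[n --> \oo] --> 0%E.
  by apply: aeW => x _; apply: cvg_EFin; [exact: nearW|exact: dyadic_approx_powR_cvg].
have Ff : \forall x \ae nu, forall n, setT x -> (`|F n x| <= (`|f x| `^ p)%:E)%E.
  apply: aeW => x n _; rewrite gee0_abs ?lee_fin ?powR_ge0// ge0_ler_powR ?(ltW p_gt0)//.
  exact: (dyadic_approx_err n (f x)).1.
have [_ cvF _] := dominated_convergence measurableT mF (measurable_cst _) F0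
  (Lfun_integrable p_ge1 hf) Ff.
have ep0 : (0 < (e `^ p)%:E)%E by rewrite lte_fin powR_gt0.
have [N _ /(_ N (leqnn N)) /=] := cvF _ (open_ereal_lt' ep0).
rewrite (eq_integral (F N)) => [FN|x _]; last by rewrite subr0 ger0_norm ?powR_ge0.
by exists N; apply: Lnorm_lt_integral_powR.
Qed.

Section setexpr_density.
Context (J : Type) (G : J -> set T).
Hypothesis generated : <<s range G>> = measurable.

Lemma approx_scaled_indic (k : R) (A : set T) : measurable A ->
  forall e : R, 0 < e -> exists t,
  ('N[nu]_p%:E[EFin \o (fun x => k * \1_A x - k * \1_(setexpr_set G t) x)%R]
     < e%:E)%E.
Proof.
move=> mA e e0; set c := `|k| `^ p.
have c0 : 0 <= c by exact: powR_ge0.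
have ep0 : 0 < e `^ p by exact: powR_gt0.
set delta := e `^ p / (c + 1).
have delta0 : 0 < delta by rewrite divr_gt0// ltr_pwDr.
have [t ht] := approximable_measurable generated nu_fin mA delta0.
exists t; apply: Lnorm_lt_integral_powR => //.
set E := A `+` setexpr_set G t.
have mE : measurable E by exact: measurableY_setexpr.
have pw x : `|k * \1_A x - k * \1_(setexpr_set G t) x| `^ p = c * \1_E x.
  rewrite -mulrBr normrM normr_indicB powRM// indicE.
  by case: (_ \in _); rewrite ?powR1 ?powR0 ?gt_eqF.
under eq_integral do rewrite pw EFinM.
rewrite ge0_integralZl_EFin//; last by apply/measurable_EFinP; exact: measurable_indic.
rewrite integral_indic// setIT.
have Efin : nu E \is a fin_num by rewrite ge0_fin_numE// (lt_trans ht) ?ltry.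
rewrite -(fineK Efin) lte_fin in ht *; rewrite -EFinM lte_fin.
have E0 : 0 <= fine (nu E) by rewrite fine_ge0.
have hd : delta * (c + 1) = e `^ p by rewrite /delta divfK// gt_eqF// ltr_pwDr.
nra.
Qed.

Definition setexpr_simple_fun (s : seq (rat * setexpr J)) : T -> R :=
  rat_simple_fun [seq (a.1, setexpr_set G a.2) | a <- s].

Lemma measurable_setexpr_simple_fun s : measurable_fun setT (setexpr_simple_fun s).
Proof.
rewrite /setexpr_simple_fun /rat_simple_fun; under eq_fun => x do rewrite big_map.
apply: measurable_sum => a; apply/measurable_funM/measurable_indic => //.
exact: measurable_setexpr.
Qed.

Lemma setexpr_simple_fun_Lfun s : setexpr_simple_fun s \in Lfun nu p%:E.
Proof.
apply: (Lfun_bounded (measurable_setexpr_simple_fun s)).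
exact: rat_simple_fun_bound.
Qed.

Lemma approx_rat_simple_fun (s : seq (rat * set T)) :
  (forall a, a \in s -> measurable a.2) -> forall e : R, 0 < e ->
  exists s', ('N[nu]_p%:E[EFin \o (rat_simple_fun s \- setexpr_simple_fun s')%R]
                < e%:E)%E.
Proof.
elim: s => [|a s IH] ms e e0.
  exists [::]; rewrite (@eq_Lnorm _ _ _ _ _ _ (cst 0%E)) ?Lnorm0 ?lte_fin ?eqe ?gt_eqF//.
  by move=> x; rewrite /= /setexpr_simple_fun /rat_simple_fun !big_nil subr0.
have e2 : 0 < e / 2 by rewrite divr_gt0.
have [t ht] := approx_scaled_indic (ratr a.1) (ms _ (mem_head _ _)) e2.
have ms' b : b \in s -> measurable b.2 by move=> bs; apply: ms; rewrite in_cons bs orbT.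
have [s' hs'] := IH ms' _ e2.
exists ((a.1, t) :: s').
pose u x : R := ratr a.1 * \1_(a.2) x - ratr a.1 * \1_(setexpr_set G t) x.
pose v : T -> R := rat_simple_fun s \- setexpr_simple_fun s'.
rewrite (@eq_Lnorm _ _ _ _ _ _ (EFin \o (u \+ v)%R)); last first.
  move=> x; rewrite /u /v /setexpr_simple_fun /= !rat_simple_fun_cons /=.
  by congr (_%:E); lra.
have mu : measurable_fun setT u.
  apply: measurable_funB; apply/measurable_funM/measurable_indic => //.
    exact/ms/mem_head.
  exact: measurable_setexpr.
have mv : measurable_fun setT v.
  apply: measurable_funB; first exact: measurable_rat_simple_fun.
  exact: measurable_setexpr_simple_fun.
apply: le_lt_trans (minkowski_EFin nu mu mv p_ge1) _.
by rewrite [e]splitr EFinD lteD.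
Qed.

Lemma setexpr_simple_fun_dense (f : T -> R) : f \in Lfun nu p%:E ->
  forall e : R, 0 < e -> exists s,
  ('N[nu]_p%:E[(fun x => (f x - setexpr_simple_fun s x)%:E)] < e%:E)%E.
Proof.
move=> hf e e0; have e2 : 0 < e / 2 by rewrite divr_gt0.
have mf := measurable_Lfun hf.
have [n hn] := approx_dyadic hf e2.
pose steps := [seq (a.1, f @^-1` a.2) | a <- dyadic_steps R n].
have msteps a : a \in steps -> measurable a.2.
  move=> /mapP[b /measurable_dyadic_steps mb ->] /=.
  by rewrite -[X in measurable X]setTI; exact: mf.
have [s hs] := approx_rat_simple_fun msteps e2.
exists s.
pose w := (f \- (dyadic_approx n \o f)) \+ (rat_simple_fun steps \- setexpr_simple_fun s).
rewrite (@eq_Lnorm _ _ _ _ _ _ (EFin \o w)%R); last first.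
  by move=> x; rewrite /w /= rat_simple_fun_preimage /dyadic_approx; congr (_%:E); lra.
apply: le_lt_trans (minkowski_EFin _ _ _ p_ge1) _.
- exact/(measurable_funB mf)/(measurableT_comp (measurable_dyadic_approx n) mf).
- apply: measurable_funB; first exact: measurable_rat_simple_fun.
  exact: measurable_setexpr_simple_fun.
by rewrite [e]splitr EFinD lteD.
Qed.

End setexpr_density.

End Lp_finite_measure.
Arguments setexpr_simple_fun {d T R J} G s.

Theorem Lfun_separable d (T : measurableType d) (R : realType) (I : countType)
    (G : I -> set T) (generated : <<s range G>> = measurable)
    (nu : {measure set T -> \bar R}) (nu_fin : (nu [set: T] < +oo)%E)
    (p : R) (p_ge1 : 1 <= p) :
  exists D : set (T -> R),
    countable D /\
    (forall g, D g -> g \in Lfun nu p%:E) /\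
    (forall f, f \in Lfun nu p%:E -> forall eps : R, 0 < eps ->
       exists2 g, D g & ('N[nu]_p%:E [(fun x => (f x - g x)%:E)] < eps%:E)%E).
Proof.
exists (range (setexpr_simple_fun G)); split; [|split].
- exact: card_le_trans (card_image_le _ _) (countableP _).
- by move=> _ [s _ <-]; exact: setexpr_simple_fun_Lfun.
move=> f hf e e0; have [s hs] := setexpr_simple_fun_dense nu_fin p_ge1 generated hf e0.
by exists (setexpr_simple_fun G s).
Qed.

Section rational_halfspaces.
Variable R : realType.

Definition rat_halfspace (iq : nat * rat) : set (nat -> R) :=
  [set x | ratr iq.2 < x iq.1].

Let RNrat := g_sigma_algebraType (range rat_halfspace).

Lemma measurable_coord_rat (i : nat) :
  measurable_fun [set: RNrat] (fun x : RNrat => x i).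
Proof.
apply: (measurability _ (RGenOInfty.measurableE R)) => _ [_ [y ->] <-].
have -> : [set: RNrat] `&` (fun x => x i) @^-1` `]y, +oo[%classic =
    \bigcup_(q : rat) if y < ratr q then rat_halfspace (i, q) else set0.
  apply/seteqP; split => x /=.
    rewrite in_itv/= andbT => -[_ /rat_in_itvoo[q]]; rewrite in_itv/= => /andP[yq qx].
    by exists q => //; rewrite yq.
  move=> [q _]; case: ifPn => // yq /= qx; split => //.
  by rewrite in_itv/= andbT (lt_trans yq).
apply: bigcupT_measurable_rat => q; case: ifPn => _ //.
by apply: sub_sigma_algebra; exists (i, q).
Qed.

Lemma RNinf_generated : <<s range rat_halfspace>> = @measurable _ (RNinf R).
Proof.
apply/seteqP; split.
  apply: smallest_sub; first exact: sigma_algebra_measurable.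
  move=> _ [[i q] _ <-]; apply: sub_sigma_algebra.
  exists i.+1, (fun j => if j == i then `]ratr q, +oo[%classic else setT).
  split=> [j|]; first by case: ifPn => _ //; exact: measurable_itv.
  apply/seteqP; split => x /=.
    by move=> qx j _; case: ifPn => [/eqP ->|//]; rewrite /= in_itv/= andbT.
  by move/(_ i (ltnSn i)); rewrite eqxx /= in_itv/= andbT.
apply: smallest_sub; first exact: smallest_sigma_algebra.
move=> _ [m [C [mC ->]]].
have -> : [set x : nat -> R | forall i, (i < m)%N -> C i (x i)] =
    \bigcap_(i in `I_m) ((fun x : RNrat => x i) @^-1` C i).
  by apply/seteqP; split => x /= h i; apply: h.
apply: (@fin_bigcap_measurable _ RNrat) => [|i _]; first exact: finite_II.
by rewrite -[X in measurable X]setTI; exact: measurable_coord_rat.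
Qed.

End rational_halfspaces.

Unset Implicit Arguments. Set Strict Implicit.

Theorem lemma2p3 (R : realType)
  (mu : {measure set (RNinf R) -> \bar R})
  (hmu : forall A : set (RNinf R), measurable A -> mu A = mu_star A)
  (M : set (RNinf R)) (mM : measurable M)
  (hM : (mu M < +oo)%E)
  (p : R) (hp : 1 <= p) :
  exists D : set (RNinf R -> R),
    countable D /\
    (forall g, D g -> g \in Lfun (mrestr mu mM) p%:E) /\
    (forall f, f \in Lfun (mrestr mu mM) p%:E ->
       forall eps : R, 0 < eps ->
       exists2 g, D g &
         ('N[mrestr mu mM]_p%:E [(fun x => (f x - g x)%:E)] < eps%:E)%E).
Proof.
have muM_fin : (mrestr mu mM [set: RNinf R] < +oo)%E by rewrite /mrestr setTI.
exact: (Lfun_separable (T := RNinf R) (RNinf_generated R) muM_fin hp).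
Qed.
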